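(* Let $\Omega\subset\mathbb{R}^n$ be a bounded open set, $A\subset\Omega$ a non-empty open set, and $\lambda>0$. Let $f(x)=\mathrm{dist}^2(x,A^c)$ and let $f^{-}_{\overline\Omega}:\overline\Omega\to\mathbb{R}$ equal $f$ on $\Omega$ and $\inf_\Omega f$ on $\partial\Omega$. Then for every $x\in\overline\Omega$, $$\mathcal{M}(\lambda;A^c)(x)=(1+\lambda)\Big(f^{-}_{\overline\Omega}(x)-C^l_{\lambda,\Omega}(f^{-}_{\overline\Omega})(x)\Big).$$
   Context: $A^c=\mathbb{R}^n\setminus A$; $\mathrm{dist}(x,B)=\inf_{y\in B}|x-y|$. For a nonempty closed set $F$, $\mathcal{M}(\lambda;F)(x)=(1+\lambda)\big(\mathrm{dist}^2(x;F)-C^l_\lambda(\mathrm{dist}^2(\cdot;F))(x)\big)$ for $x\in\mathbb{R}^n$, where $C^l_\lambda(g)(x)=\mathrm{co}[g+\lambda|\cdot|^2](x)-\lambda|x|^2$ and $\mathrm{co}$ is the convex envelope. For bounded $g:\overline\Omega\to\mathbb{R}$ and $x\in\overline\Omega$: $M_{\lambda,\Omega}(g)(x)=\inf_{y\in\overline\Omega}\{g(y)+\lambda|y-x|^2\}$, $M^{\lambda}_{\Omega}(g)(x)=\sup_{y\in\overline\Omega}\{g(y)-\lambda|y-x|^2\}$, and $C^l_{\lambda,\Omega}(g)(x)=M^{\lambda}_{\Omega}(M_{\lambda,\Omega}(g))(x)$. *)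

From mathcomp Require Import all_boot all_order all_algebra.
From mathcomp Require Import all_classical all_reals all_analysis.
Set Implicit Arguments. Unset Strict Implicit. Unset Printing Implicit Defensive.
Import Order.TTheory GRing.Theory Num.Theory.
Import numFieldTopology.Exports numFieldNormedType.Exports.
Local Open Scope classical_set_scope.
Local Open Scope ring_scope.

Section Defs.
Variables (R : realType) (n : nat).
Notation V := 'rV[R]_n.

Definition sqnorm (x : V) : R := \sum_(i < n) (x ord0 i) ^+ 2.

Definition dist (x : V) (B : set V) : R :=
  inf [set Num.sqrt (sqnorm (x - y)) | y in B].

Definition convex_fun (h : V -> R) : Prop :=
  forall (x y : V) (t : R), 0 <= t <= 1 ->
    h (t *: x + (1 - t) *: y) <= t * h x + (1 - t) * h y.

Definition co (g : V -> R) (x : V) : R :=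
  sup [set h x | h in [set h : V -> R | convex_fun h /\ forall z, h z <= g z]].

Definition Cl (lam : R) (g : V -> R) (x : V) : R :=
  co (fun y => g y + lam * sqnorm y) x - lam * sqnorm x.

Definition Mtrans (lam : R) (F : set V) (x : V) : R :=
  (1 + lam) * ((dist x F) ^+ 2 - Cl lam (fun y => (dist y F) ^+ 2) x).

Definition Minf (lam : R) (Om : set V) (g : V -> R) (x : V) : R :=
  inf [set g y + lam * sqnorm (y - x) | y in closure Om].

Definition Msup (lam : R) (Om : set V) (g : V -> R) (x : V) : R :=
  sup [set g y - lam * sqnorm (y - x) | y in closure Om].

Definition ClOm (lam : R) (Om : set V) (g : V -> R) (x : V) : R :=
  Msup lam Om (Minf lam Om g) x.

(* f^-_{cl Omega}: equals f on Omega and inf_Omega f on the boundary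
   (values outside cl Omega are irrelevant; we use inf_Omega f there too) *)
Definition fminus (Om : set V) (f : V -> R) (x : V) : R :=
  if `[< Om x >] then f x else inf (f @` Om).

End Defs.

From mathcomp Require Import all_boot all_order all_algebra.
From mathcomp Require Import all_classical all_reals all_analysis.
From mathcomp Require Import ring lra.
Set Implicit Arguments. Unset Strict Implicit. Unset Printing Implicit Defensive.
Import Order.TTheory GRing.Theory Num.Theory.
Import numFieldTopology.Exports numFieldNormedType.Exports.
Local Open Scope classical_set_scope.
Local Open Scope ring_scope.

(* On the closure of Om the truncation f^- of f = dist^2(., A^c) agrees with f: f vanishes
   off A, in particular on the boundary of Om, where f^- takes the value inf_Om f = 0.
   Both compensated transforms are suprema of quadratic caps z |-> c - lam |z - y|^2 lying
   below f: for C^l_lam because, by the subgradient inequality, the affine minorants of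
   f + lam |.|^2 are exactly such caps plus lam |.|^2; for C^l_{lam,Om} the caps have
   centres y in the closure of Om and lie below f there.  Both comparisons go through a
   boundary point w of Om on a segment, where f(w) = 0 <= f: a cap below f on the closure
   of Om is below f everywhere, and a cap centred outside the closure of Om, taken at x, is
   at most M_{lam,Om}(f)(w) - lam |w - x|^2 for w on the segment from x to its centre. *)

Section Dot.
Variables (R : realType) (n : nat).
Notation V := 'rV[R]_n.

Definition dot (u v : V) : R := \sum_(i < n) u ord0 i * v ord0 i.

Lemma dotC (u v : V) : dot u v = dot v u.
Proof. by apply: eq_bigr => i _; rewrite mulrC. Qed.

Lemma dotDl (u v w : V) : dot (u + v) w = dot u w + dot v w.
Proof. by rewrite /dot -big_split; apply: eq_bigr => i _; rewrite mxE mulrDl. Qed.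

Lemma dotBl (u v w : V) : dot (u - v) w = dot u w - dot v w.
Proof. by rewrite /dot -sumrB; apply: eq_bigr => i _; rewrite !mxE mulrBl. Qed.

Lemma dotZl (a : R) (u v : V) : dot (a *: u) v = a * dot u v.
Proof. by rewrite /dot mulr_sumr; apply: eq_bigr => i _; rewrite mxE mulrA. Qed.

Lemma dotDr (u v w : V) : dot u (v + w) = dot u v + dot u w.
Proof. by rewrite dotC dotDl !(dotC u). Qed.

Lemma dotBr (u v w : V) : dot u (v - w) = dot u v - dot u w.
Proof. by rewrite dotC dotBl !(dotC u). Qed.

Lemma dotZr (a : R) (u v : V) : dot u (a *: v) = a * dot u v.
Proof. by rewrite dotC dotZl dotC. Qed.

Lemma dot0l (u : V) : dot 0 u = 0.
Proof. by rewrite /dot big1 // => i _; rewrite mxE mul0r. Qed.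

Lemma dot_deltal (i : 'I_n) (u : V) : dot (delta_mx ord0 i) u = u ord0 i.
Proof.
rewrite /dot (bigD1 i) //= big1 => [|j /negbTE nji]; last by rewrite mxE nji mul0r.
by rewrite mxE !eqxx mul1r addr0.
Qed.

Lemma sqnorm_dot (u : V) : sqnorm u = dot u u.
Proof. by apply: eq_bigr => i _; rewrite expr2. Qed.

Lemma sqnorm_ge0 (u : V) : 0 <= sqnorm u.
Proof. by apply: sumr_ge0 => i _; rewrite sqr_ge0. Qed.

Lemma sqnorm0 : sqnorm (0 : V) = 0.
Proof. by rewrite sqnorm_dot dot0l. Qed.

Lemma sqnormB (u v : V) : sqnorm (u - v) = sqnorm u - 2 * dot u v + sqnorm v.
Proof. by rewrite !sqnorm_dot dotBl !dotBr (dotC v u); ring. Qed.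

Lemma sqnormZ (a : R) (u : V) : sqnorm (a *: u) = a ^+ 2 * sqnorm u.
Proof. by rewrite !sqnorm_dot dotZl dotZr; ring. Qed.

Lemma sqnormBC (u v : V) : sqnorm (u - v) = sqnorm (v - u).
Proof. by rewrite !sqnormB (dotC v u); ring. Qed.

Lemma sqnorm_segment (y z : V) (t : R) : 0 <= t <= 1 ->
  sqnorm (y + t *: (z - y) - y) + sqnorm (y + t *: (z - y) - z) <= sqnorm (z - y).
Proof.
move=> /andP[t0 t1].
have -> : y + t *: (z - y) - y = t *: (z - y) by apply/rowP => j; rewrite !mxE; ring.
have -> : y + t *: (z - y) - z = (t - 1) *: (z - y).
  by apply/rowP => j; rewrite !mxE; ring.
rewrite !sqnormZ -mulrDl -[leRHS]mul1r ler_wpM2r ?sqnorm_ge0 //; nra.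
Qed.

Lemma affine_convex (a : V) (b : R) : convex_fun (fun z => b + dot a z).
Proof. by move=> u v t _; rewrite dotDr !dotZr -subr_ge0 (_ : _ - _ = 0) //; ring. Qed.

Lemma co_ge (G h : V -> R) (x : V) :
  convex_fun h -> (forall z, h z <= G z) -> h x <= co G x.
Proof.
move=> hc hG; apply: sup_upper_bound; last by exists h.
by split; [exists (h x), h | exists (G x) => _ [h' [_ h'G] <-]].
Qed.

End Dot.

Section Subgradient.
Variables (R : realType) (n : nat).
Notation V := 'rV[R]_n.

Definition vanish_from (k : nat) (u : V) := forall i : 'I_n, (k <= i)%N -> u ord0 i = 0.

Lemma vanish_fromD k (a b : R) (u v : V) :
  vanish_from k u -> vanish_from k v -> vanish_from k (a *: u + b *: v).
Proof. by move=> uk vk i ki; rewrite !mxE uk // vk // !mulr0 addr0. Qed.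

Lemma vanish_from0 (u : V) : vanish_from 0 u -> u = 0.
Proof. by move=> u0; apply/rowP => i; rewrite [u _ _]u0 ?mxE. Qed.

Lemma convex_fun_shift (h : V -> R) (x a : V) : convex_fun h ->
  convex_fun (fun u => h (x + u) - h x - dot a u).
Proof.
move=> hc u v t t01.
have -> : x + (t *: u + (1 - t) *: v) = t *: (x + u) + (1 - t) *: (x + v).
  by apply/rowP => j; rewrite !mxE; ring.
have := hc (x + u) (x + v) t t01; rewrite dotDr !dotZr; lra.
Qed.

Lemma convex_chord_ge0 (phi : V -> R) (p q : V) (r s : R) :
  convex_fun phi -> 0 < r -> 0 < s ->
  0 <= phi ((s / (r + s)) *: p + (r / (r + s)) *: q) -> 0 <= s * phi p + r * phi q.
Proof.
move=> phic r0 s0 mid0; have rs0 : 0 < r + s by rewrite addr_gt0.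
have rsE : r / (r + s) = 1 - s / (r + s) by field; rewrite gt_eqF.
have t01 : 0 <= s / (r + s) <= 1.
  by apply/andP; split; [rewrite divr_ge0 ?ltW | rewrite ler_pdivrMr // mul1r lerDr ltW].
rewrite rsE in mid0.
have -> : s * phi p + r * phi q =
    (r + s) * (s / (r + s) * phi p + (1 - s / (r + s)) * phi q).
  by field; rewrite gt_eqF.
by apply: mulr_ge0; [exact: ltW | exact: le_trans mid0 (phic p q _ t01)].
Qed.

(* The one-dimensional Hahn-Banach step: [c] is the supremum of the left slopes of [phi]
   along the new coordinate, which lie below all its right slopes by convexity. *)
Lemma convex_ge0_extend k (phi : V -> R) (hk : (k < n)%N) :
  convex_fun phi -> (forall u, vanish_from k u -> 0 <= phi u) ->
  exists c, forall v, vanish_from k.+1 v -> c * v ord0 (Ordinal hk) <= phi v.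
Proof.
move=> phic phi_ge0; set i := Ordinal hk; pose e : V := delta_mx ord0 i.
have slopes u u' r s : vanish_from k u -> vanish_from k u' -> 0 < r -> 0 < s ->
    - phi (u - r *: e) / r <= phi (u' + s *: e) / s.
  move=> uk u'k r0 s0.
  have := convex_chord_ge0 (p := u - r *: e) (q := u' + s *: e) phic r0 s0.
  have -> : (s / (r + s)) *: (u - r *: e) + (r / (r + s)) *: (u' + s *: e) =
            (s / (r + s)) *: u + (r / (r + s)) *: u'.
    by apply/rowP => j; rewrite !mxE; field; rewrite gt_eqF // addr_gt0.
  move=> /(_ (phi_ge0 _ (vanish_fromD _ _ uk u'k))) chord.
  rewrite ler_pdivrMr // mulrAC ler_pdivlMr //; nra.
pose S := [set x | exists u r, [/\ vanish_from k u, 0 < r & x = - phi (u - r *: e) / r]].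
have vanish0 : vanish_from k 0 by move=> j _; rewrite mxE.
have S_ub u' s : vanish_from k u' -> 0 < s -> ubound S (phi (u' + s *: e) / s).
  by move=> u'k s0 _ [u [r [uk r0 ->]]]; apply: slopes.
have S0 : S !=set0 by exists (- phi (0 - 1 *: e) / 1), 0, 1.
have hasS : has_sup S by split; last by exists (phi (0 + 1 *: e) / 1); apply: S_ub.
exists (sup S) => v vk1; set s := v ord0 i.
have uk : vanish_from k (v - s *: e).
  move=> j kj; rewrite !mxE /=; have [->|ji] := eqVneq j i.
    by rewrite mulr1 subrr.
  rewrite mulr0 subr0; apply: vk1.
  by rewrite ltn_neqAle kj andbT; apply: contra_neq ji => kE; apply: val_inj.
have [s_lt0|s_gt0|s0] := ltgtP s 0.
- have : S (- phi (v - s *: e - (- s) *: e) / - s).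
    by exists (v - s *: e), (- s); rewrite oppr_gt0.
  move=> /(sup_upper_bound hasS); rewrite scaleNr opprK subrK.
  by rewrite invrN mulrNN ler_ndivrMr.
- have := ge_sup S0 (S_ub _ _ uk s_gt0); rewrite subrK.
  by rewrite ler_pdivlMr.
- by move: uk; rewrite s0 mulr0 scale0r subr0; apply: phi_ge0.
Qed.

Lemma convex_fun_subgradient (h : V -> R) (x : V) : convex_fun h ->
  exists a : V, forall z, h x + dot a (z - x) <= h z.
Proof.
move=> hc.
suff /(_ n (leqnn n)) [a ha] : forall k, (k <= n)%N ->
    exists a : V, forall u, vanish_from k u -> h x + dot a u <= h (x + u).
  by exists a => z; have := ha (z - x); rewrite subrKC; apply => i; rewrite leqNgt ltn_ord.
elim=> [_|k IHk hk].
  by exists 0 => u /vanish_from0 ->; rewrite dot0l !addr0.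
have [a ha] := IHk (ltnW hk).
have [|c hc'] := convex_ge0_extend hk (convex_fun_shift x a hc).
  by move=> u /ha; rewrite subr_ge0 lerBrDr addrC.
exists (a + c *: delta_mx ord0 (Ordinal hk)) => u /hc'.
by rewrite dotDl dotZl dot_deltal; lra.
Qed.

End Subgradient.

Lemma open_separated_closureC (T : topologicalType) (U : set T) :
  open U -> separated U (~` closure U).
Proof.
move=> oU; split; first by rewrite setICr.
rewrite -subset0 => w [Uw cw].
have /cw [u [ncu Uu]] : nbhs w U by exact: open_nbhs_nbhs.
exact/ncu/subset_closure.
Qed.

(* The segment is connected, and [U] and the complement of its closure separate each other. *)
Lemma segment_meets_boundary (R : realType) (V : normedModType R) (U : set V) (y z : V) :
  open U -> closure U y -> ~ closure U z ->
  exists2 t, 0 <= t <= 1 & closure U (y + t *: (z - y)) /\ ~ U (y + t *: (z - y)).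
Proof.
move=> oU cy ncz; pose p t := y + t *: (z - y).
apply: contrapT => /forall2NP nbd.
have seg_conn : connected (p @` `[0, 1]).
  apply: connected_continuous_connected; first exact: segment_connected.
  apply: continuous_subspaceT => t; apply: cvgD; first exact: cvg_cst.
  by apply: cvgZ; [exact: cvg_id | exact: cvg_cst].
have seg_sub : p @` `[0, 1] `<=` U `|` ~` closure U.
  move=> _ [t t01 <-]; have [Up|nUp] := pselect (U (p t)); [by left | right => cp].
  by case: (nbd t); apply; [rewrite /= in_itv in t01 | split].
have [segU|] := connected_subset (open_separated_closureC oU) seg_sub seg_conn.
  apply: ncz; apply: subset_closure.
  have <- : p 1 = z by rewrite /p scale1r subrKC.
  by apply: segU; exists 1 => //; rewrite set_itvcc /= lexx ler01.
move=> /(_ y); apply; last exact: cy.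
by exists 0; [rewrite set_itvcc /= lexx ler01 | rewrite /p scale0r addr0].
Qed.

Section Compensated.
Variables (R : realType) (n : nat).
Notation V := 'rV[R]_n.
Variables (Om : set V) (lam : R) (g phi : V -> R) (x : V).
Hypotheses (oOm : open Om) (lam_gt0 : 0 < lam) (g_ge0 : forall z, 0 <= g z).
Hypothesis phi_g : forall z, closure Om z -> phi z = g z.
Hypothesis g_boundary : forall z, closure Om z -> ~ Om z -> g z = 0.
Hypothesis Om_x : closure Om x.

Notation L := (Minf lam Om phi).

Lemma penalty_ge0 (u : V) : 0 <= lam * sqnorm u.
Proof. exact: mulr_ge0 (ltW lam_gt0) (sqnorm_ge0 u). Qed.

Lemma Minf_ge0 y : 0 <= L y.
Proof.
apply: lb_le_inf; first by exists (phi x + lam * sqnorm (x - y)), x.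
by move=> _ [z Om_z <-]; rewrite phi_g // addr_ge0 ?penalty_ge0.
Qed.

Lemma Minf_le_in y z : closure Om z -> L y <= g z + lam * sqnorm (z - y).
Proof.
move=> Om_z; rewrite -phi_g //; apply: ge_inf; last by exists z.
by exists 0 => _ [w Om_w <-]; rewrite phi_g // addr_ge0 ?penalty_ge0.
Qed.

Lemma Minf_glb y c :
  (forall z, closure Om z -> c <= g z + lam * sqnorm (z - y)) -> c <= L y.
Proof.
move=> c_le; apply: lb_le_inf; first by exists (phi x + lam * sqnorm (x - y)), x.
by move=> _ [z Om_z <-]; rewrite phi_g //; apply: c_le.
Qed.

Lemma Minf_le y z : closure Om y -> L y <= g z + lam * sqnorm (z - y).
Proof.
move=> Om_y; have [Om_z|nOm_z] := pselect (closure Om z); first exact: Minf_le_in.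
have [t t01 [Om_w nOm_w]] := segment_meets_boundary oOm Om_y nOm_z.
have := Minf_le_in y Om_w; rewrite g_boundary // add0r => Ly_le.
have := sqnorm_segment y z t01; rewrite -(ler_pM2l lam_gt0) mulrDr.
have := penalty_ge0 (y + t *: (z - y) - z); have := g_ge0 z; lra.
Qed.

Lemma ClOm_ge y : closure Om y -> L y - lam * sqnorm (y - x) <= ClOm lam Om phi x.
Proof.
move=> Om_y; apply: sup_upper_bound; last by exists y.
split; first by exists (L y - lam * sqnorm (y - x)), y.
exists (g x) => _ [w Om_w <-].
by have := Minf_le_in w Om_x; rewrite sqnormBC; lra.
Qed.

Lemma quadratic_minorant_le_ClOm y c :
  (forall z, c - lam * sqnorm (z - y) <= g z) ->
  c - lam * sqnorm (x - y) <= ClOm lam Om phi x.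
Proof.
move=> cap; have [Om_y|nOm_y] := pselect (closure Om y).
  apply: le_trans (ClOm_ge Om_y); rewrite sqnormBC lerD2r.
  by apply: Minf_glb => z _; have := cap z; lra.
have [t t01 [Om_w nOm_w]] := segment_meets_boundary oOm Om_x nOm_y.
have := cap (x + t *: (y - x)); rewrite g_boundary // => cap_w.
have := ClOm_ge Om_w; have := Minf_ge0 (x + t *: (y - x)).
have := sqnorm_segment x y t01; rewrite -(ler_pM2l lam_gt0) mulrDr (sqnormBC y x).
lra.
Qed.

Lemma Cl_le_ClOm : Cl lam g x <= ClOm lam Om phi x.
Proof.
rewrite /Cl /co lerBlDr; apply: ge_sup.
  exists (0 + dot 0 x), (fun z => 0 + dot 0 z); split => [|z]; first exact: affine_convex.
  by rewrite dot0l add0r addr_ge0 ?penalty_ge0.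
move=> _ [h [hc hG] <-]; rewrite -lerBlDr.
have [a ha] := convex_fun_subgradient x hc.
pose y := (2 * lam)^-1 *: a; pose c := h x - dot a x + lam * sqnorm y.
have capE z : c - lam * sqnorm (z - y) = h x + dot a (z - x) - lam * sqnorm z.
  by rewrite /c sqnormB /y dotZr dotBr (dotC z a); field; rewrite gt_eqF.
have := @quadratic_minorant_le_ClOm y c.
rewrite capE subrr (dotC a) dot0l addr0; apply => z.
by rewrite capE; have := ha z; have := hG z; lra.
Qed.

Lemma ClOm_le_Cl : ClOm lam Om phi x <= Cl lam g x.
Proof.
apply: ge_sup; first by exists (L x - lam * sqnorm (x - x)), x.
move=> _ [y Om_y <-]; rewrite /Cl lerBrDr.
pose b := L y - lam * sqnorm y.
have capE z : L y - lam * sqnorm (z - y) + lam * sqnorm z = b + dot (2 * lam *: y) z.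
  by rewrite /b sqnormB dotZl (dotC z y); ring.
rewrite sqnormBC capE.
apply: (co_ge (h := fun z => b + dot (2 * lam *: y) z)); first exact: affine_convex.
by move=> z; rewrite -capE lerD2r lerBlDr; apply: Minf_le.
Qed.

Lemma Cl_eq_ClOm : Cl lam g x = ClOm lam Om phi x.
Proof. by apply/le_anti; rewrite Cl_le_ClOm ClOm_le_Cl. Qed.

End Compensated.

Section Distance.
Variables (R : realType) (n : nat).
Notation V := 'rV[R]_n.

Lemma dist2_le (F : set V) (x w : V) : F w -> dist x F ^+ 2 <= sqnorm (x - w).
Proof.
move=> Fw; have lb : has_lbound [set Num.sqrt (sqnorm (x - y)) | y in F].
  by exists 0 => _ [y _ <-]; exact: sqrtr_ge0.
have d0 : 0 <= dist x F.
  by apply: lb_le_inf; [exists (Num.sqrt (sqnorm (x - w))), w | move=> _ [y _ <-]].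
have dw : dist x F <= Num.sqrt (sqnorm (x - w)) by apply: ge_inf; last exists w.
by rewrite -(sqr_sqrtr (sqnorm_ge0 (x - w))) ler_sqr ?nnegrE ?sqrtr_ge0.
Qed.

Lemma dist2_eq0 (F : set V) (w : V) : F w -> dist w F ^+ 2 = 0.
Proof.
by move=> Fw; apply/le_anti; rewrite sqr_ge0 andbT -(sqnorm0 R n) -(subrr w) dist2_le.
Qed.

Lemma closure_sqnorm_lt (Om : set V) (z : V) (eps : R) : 0 < eps -> closure Om z ->
  exists2 u, Om u & sqnorm (u - z) < eps.
Proof.
move=> eps_gt0 Om_z; pose del := Num.min 1 (eps / (n%:R + 1)).
have n1_gt0 : 0 < n%:R + 1 :> R by rewrite ltr_pwDr.
have del_gt0 : 0 < del by rewrite lt_min ltr01 divr_gt0.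
have del_le1 : del <= 1 by rewrite ge_min lexx.
have del_le : del <= eps / (n%:R + 1) by rewrite ge_min lexx orbT.
have [u [Om_u [_ zu]]] := Om_z _ (nbhsx_ballx z del del_gt0).
exists u => //; have : sqnorm (u - z) <= \sum_(i < n) del.
  apply: ler_sum => i _; have := zu ord0 i.
  by rewrite -ball_normE /= ltr_norml !mxE => /andP[? ?]; nra.
rewrite sumr_const card_ord -mulr_natl => /le_lt_trans; apply.
apply: le_lt_trans (ler_wpM2l (ler0n _ _) del_le) _.
by rewrite mulrA ltr_pdivrMr //; nra.
Qed.

(* Domination forces [f = 0] on the boundary of [Om] and [inf_Om f = 0]. *)
Lemma fminus_closure (Om : set V) (f : V -> R) (x : V) :
  (forall z, 0 <= f z) ->
  (forall z, closure Om z -> ~ Om z -> forall w, f w <= sqnorm (w - z)) ->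
  closure Om x -> fminus Om f x = f x.
Proof.
move=> f_ge0 f_le Om_x; rewrite /fminus.
have [Ox|nOx] := pselect (Om x); first by rewrite asboolT.
rewrite asboolF //; have fx0 : f x = 0.
  by apply/le_anti; rewrite f_ge0 andbT; have := f_le x Om_x nOx x; rewrite subrr sqnorm0.
rewrite fx0; apply/le_anti/andP; split; last first.
  have [u [Om_u _]] := Om_x setT filterT.
  by apply: lb_le_inf; [exists (f u), u | move=> _ [y _ <-]].
apply/ler_addgt0Pr => eps eps_gt0; rewrite add0r.
have [w Om_w wx_lt] := closure_sqnorm_lt eps_gt0 Om_x.
apply: le_trans (ltW (le_lt_trans (f_le x Om_x nOx w) wx_lt)).
by apply: ge_inf; [exists 0 => _ [y _ <-] | exists w].
Qed.

End Distance.

Theorem corollary3p5 (R : realType) (n : nat) (Om A : set 'rV[R]_n) (lam : R) :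
  open Om ->
  bounded_set Om ->
  open A -> A !=set0 -> A `<=` Om ->
  0 < lam ->
  let f := fun x => (dist x (~` A)) ^+ 2 in
  forall x, closure Om x ->
    Mtrans lam (~` A) x =
    (1 + lam) * (fminus Om f x - ClOm lam Om (fminus Om f) x).
Proof.
move=> oOm _ _ _ AOm lam_gt0 f x Om_x.
have f_ge0 z : 0 <= f z by exact: sqr_ge0.
have f_le z : closure Om z -> ~ Om z -> forall w, f w <= sqnorm (w - z).
  by move=> _ nOz w; apply: dist2_le => /AOm.
have f_boundary z : closure Om z -> ~ Om z -> f z = 0.
  by move=> _ nOz; apply: dist2_eq0 => /AOm.
have fminusE z : closure Om z -> fminus Om f z = f z by apply: fminus_closure.
by rewrite /Mtrans fminusE // (Cl_eq_ClOm oOm lam_gt0 f_ge0 fminusE f_boundary Om_x).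
Qed.
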